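(* For every $L \in \mathbb{N}_0$, every labeled graph $(G,\ell_G)$ and all vertices $u,v \in V(G)$, the following are equivalent: (1) $u$ and $v$ receive the same color after $L$ iterations of the $1$-MWL, i.e. $C^{1,\mathrm{m}}_L(u) = C^{1,\mathrm{m}}_L(v)$; (2) the mean unrolling trees $\mathsf{m\text{-}unr}(G,u,L)$ and $\mathsf{m\text{-}unr}(G,v,L)$ are isomorphic (as labeled rooted trees).
   Context: A labeled graph $(G,\ell_G)$ is a finite undirected graph $G$ with a label function $\ell_G\colon V(G)\to\Sigma$, $\Sigma$ a countable set; $N(v)$ denotes the neighborhood of $v$. For a finite multiset $X$, $\mathsf{set}(X)$ is the set of its distinct elements, $\mathsf{mul}_X(x)$ the multiplicity of $x$, and $\mathsf{freq}(X) = \{(x, \mathsf{mul}_X(x)/|X|) : x \in \mathsf{set}(X)\}$. The $1$-MWL (mean $1$-dimensional Weisfeiler--Leman algorithm) computes colorings $C^{1,\mathrm{m}}_t\colon V(G)\to\mathbb{N}$: $C^{1,\mathrm{m}}_0 = \ell_G$ (via a fixed injection $\Sigma\to\mathbb{N}$), and for $t>0$, $C^{1,\mathrm{m}}_t(v) = \mathsf{RELABEL}\bigl(C^{1,\mathrm{m}}_{t-1}(v), \mathsf{freq}(M_{t-1}(v))\bigr)$, where $M_{t-1}(v) = \{\!\!\{ C^{1,\mathrm{m}}_{t-1}(w) : w \in N(v)\}\!\!\}$ and $\mathsf{RELABEL}$ injectively maps each pair to a natural number not used in previous iterations. The unrolling tree $\mathsf{unr}(G,u,L)$ is the labeled rooted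 tree defined inductively: for $L=0$ it is a single vertex labeled $\ell_G(u)$; for $L>0$ it has a root labeled $\ell_G(u)$ under which, for each $w\in N(u)$, a copy of $\mathsf{unr}(G,w,L-1)$ is attached. Edges are regarded as directed away from the root; the root is at level $0$. Isomorphism of labeled rooted trees means a root-preserving, edge-preserving, label-preserving bijection. Mean pruning: starting from $T=\mathsf{unr}(G,u,L)$, for $l = L-1, L-2, \dots, 0$ in this order, for every vertex $x$ at level $l$ of the current tree, consider the multiset $\mathsf{des}_T(x)$ of isomorphism types of the subtrees rooted at the children of $x$; let $c$ be the greatest common divisor of the multiplicities $\{\mathsf{mul}_{\mathsf{des}_T(x)}(a) : a \in \mathsf{set}(\mathsf{des}_T(x))\}$; for each type $a$, delete $\frac{c-1}{c}\mathsf{mul}_{\mathsf{des}_T(x)}(a)$ of the child subtrees of $x$ of type $a$ (so $\mathsf{mul}(a)/c$ copies remain), updating $T$. The resulting tree is the mean unrolling tree $\mathsf{m\text{-}unr}(G,u,L)$. *)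

From Stdlib Require Import List Permutation.
From HB Require Import structures.
From mathcomp Require Import all_boot all_order all_algebra.
From mathcomp Require Import finmap.
From mathcomp Require Import boolp.

Set Implicit Arguments.
Unset Strict Implicit.
Unset Printing Implicit Defensive.

Local Open Scope fset_scope.

(* A labeled rooted tree: a root label and the (finite) list of child subtrees;
   the order of the list is irrelevant up to isomorphism. *)
Inductive ltree (S : Type) : Type :=
  LNode : S -> list (ltree S) -> ltree S.
Arguments LNode {S} _ _.

(* Isomorphism of labeled rooted trees (root-, edge- and label-preserving
   bijection), in its standard recursive form: equal root labels, and the
   children can be matched bijectively into pairwise isomorphic subtrees. *)
Inductive tiso (S : Type) : ltree S -> ltree S -> Prop :=
| tiso_node (a : S) (s1 s2 s2' : list (ltree S)) :
    Permutation s2 s2' -> Forall2 (@tiso S) s1 s2' ->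
    tiso (LNode a s1) (LNode a s2).

Definition mult (S : Type) (s : seq (ltree S)) (x : ltree S) : nat :=
  count (fun y => `[< tiso x y >]) s.

Definition gcd_mult (S : Type) (s : seq (ltree S)) : nat :=
  foldr (fun y g => gcdn (mult s y) g) 0%N s.

(* ch' is obtained from ch by deleting, for each isomorphism type a,
   (c-1)/c * mul(a) of the children of type a, c = gcd of the multiplicities
   (i.e. mul(a)/c copies of type a remain). *)
Definition mean_select (S : Type) (ch ch' : seq (ltree S)) : Prop :=
  (exists del, Permutation ch (ch' ++ del)) /\
  (forall x, In x ch -> mult ch x = (gcd_mult ch * mult ch' x)%N).

(* The level-by-level bottom-up procedure (levels L-1, ..., 0) is the same as
   processing every vertex after all its descendants, i.e. this recursion. *)
Inductive mprune (S : Type) : ltree S -> ltree S -> Prop :=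
| mprune_node (a : S) (ch chp ch' : list (ltree S)) :
    Forall2 (@mprune S) ch chp -> mean_select chp ch' ->
    mprune (LNode a ch) (LNode a ch').

Definition freq (X : seq nat) : {fset (nat * rat)} :=
  [fset ((x, ((count_mem x X)%:R / (size X)%:R)%R) : nat * rat) | x in X].

Definition nbr_colors (T : finType) (e : rel T) (C : T -> nat) (v : T) : seq nat :=
  [seq C w | w <- enum T & e v w].

Fixpoint mwl (Sigma : Type) (T : finType) (e : rel T) (lab : T -> Sigma)
    (inj0 : Sigma -> nat) (relabel : nat * {fset (nat * rat)} -> nat)
    (t : nat) : T -> nat :=
  match t with
  | 0 => fun v => inj0 (lab v)
  | t'.+1 => fun v =>
      relabel (mwl e lab inj0 relabel t' v,
               freq (nbr_colors e (mwl e lab inj0 relabel t') v))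
  end.

Fixpoint unr (Sigma : Type) (T : finType) (e : rel T) (lab : T -> Sigma)
    (L : nat) (u : T) : ltree Sigma :=
  match L with
  | 0 => LNode (lab u) nil
  | L'.+1 => LNode (lab u) [seq unr e lab L' w | w <- enum T & e u w]
  end.

(* Up to isomorphism, a mean-pruned tree is determined by its
   root label and by the multiplicities of the isomorphism types of its pruned
   children divided by their gcd, and two multiplicity vectors become equal
   after this division iff they are proportional. On the 1-MWL side, the colors
   of round L+1 agree iff the labels agree and the neighbour colors of round L
   have the same frequency distribution, i.e. proportional multiplicities; the
   earlier rounds come for free because colors only get refined. The induction
   hypothesis identifies the isomorphism type of a pruned child with the
   round-L color of the corresponding neighbour, so the two multiplicity
   vectors are the same. *)

From Stdlib Require Import List Permutation.
From mathcomp Require Import all_boot all_order all_algebra.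
From mathcomp Require Import finmap boolp.
Import GRing.Theory Num.Theory.

Set Implicit Arguments.
Unset Strict Implicit.
Unset Printing Implicit Defensive.

Definition proportional (A : Type) (f g : A -> nat) : Prop :=
  exists a b, [/\ 0 < a, 0 < b & forall x, a * f x = b * g x].

Lemma proportional_sym (A : Type) (f g : A -> nat) :
  proportional f g -> proportional g f.
Proof. by case=> a [b [a_pos b_pos E]]; exists b, a; split. Qed.

Lemma proportional_transfer_l (A B : Type) (R : A -> B -> Prop)
    (f g : A -> nat) (f' g' : B -> nat) :
  (forall x y, R x y -> f x = f' y /\ g x = g' y) ->
  (forall y, 0 < f' y + g' y -> exists x, R x y) ->
  proportional f g -> proportional f' g'.
Proof.
move=> Rfg Rsupp [a [b [a_pos b_pos E]]]; exists a, b; split=> // y.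
have [/eqP|/Rsupp [x /Rfg [<- <-]] //] := posnP (f' y + g' y).
by rewrite addn_eq0 => /andP[/eqP-> /eqP->]; rewrite !muln0.
Qed.

Lemma proportional_transfer (A B : Type) (R : A -> B -> Prop)
    (f g : A -> nat) (f' g' : B -> nat) :
  (forall x y, R x y -> f x = f' y /\ g x = g' y) ->
  (forall x, 0 < f x + g x -> exists y, R x y) ->
  (forall y, 0 < f' y + g' y -> exists x, R x y) ->
  proportional f g <-> proportional f' g'.
Proof.
move=> Rfg suppA suppB; split; first exact: proportional_transfer_l Rfg suppB.
by apply: (proportional_transfer_l (R := fun y x => R x y)) => // y x /Rfg[-> ->].
Qed.

Lemma biggcdn_mull (I : Type) (r : seq I) (P : pred I) (F : I -> nat) c :
  \big[gcdn/0]_(i <- r | P i) (c * F i) = c * \big[gcdn/0]_(i <- r | P i) F i.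
Proof. by rewrite (big_morph (muln c) (muln_gcdr c) (muln0 c)). Qed.

Lemma coprime_scaled_eq (A : Type) (s : seq A) (f g : A -> nat) p q :
  0 < p -> \big[gcdn/0]_(y <- s) f y = 1 -> \big[gcdn/0]_(y <- s) g y = 1 ->
  (forall x, p * f x = q * g x) -> f =1 g.
Proof.
move=> p_pos f1 g1 E.
have pq : p = q.
  by rewrite -[p]muln1 -f1 -biggcdn_mull (eq_bigr _ (fun y _ => E y)) biggcdn_mull g1 muln1.
by move=> x; apply/eqP; rewrite -(eqn_pmul2l p_pos) {2}pq E.
Qed.

Lemma Forall2_map_l (A B C : Type) (R : B -> C -> Prop) (f : A -> B) l l' :
  Forall2 R (map f l) l' -> Forall2 (fun x => R (f x)) l l'.
Proof.
elim: l l' => [|x l IH] [|y l'] F; inversion F; subst; constructor => //.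
exact: IH.
Qed.

Lemma Forall2_In_r (A B : Type) (R : A -> B -> Prop) l l' y :
  Forall2 R l l' -> In y l' -> exists x, R x y.
Proof.
elim=> [|x y' l0 l0' Rxy _ IH] //= [<-|]; [by exists x | exact: IH].
Qed.

Lemma Forall2_mem_l (A : eqType) (B : Type) (R : A -> B -> Prop) l l' x :
  Forall2 R l l' -> x \in l -> exists y, R x y.
Proof.
elim=> [|x' y l0 l0' Rxy _ IH] //; rewrite in_cons => /predU1P[->|]; last exact: IH.
by exists y.
Qed.

Section LabeledTrees.

Variable S : Type.
Implicit Types (a b : S) (x y z t : ltree S) (s : seq (ltree S)).

Fixpoint ltree_nested_ind (P : ltree S -> Prop)
    (IH : forall a s, Forall P s -> P (LNode a s)) t : P t :=
  let: LNode a s := t in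
  IH a s ((fix all_sub s : Forall P s :=
             if s is x :: s' then Forall_cons _ (ltree_nested_ind IH x) (all_sub s')
             else Forall_nil P) s).

Lemma tiso_LNode_inv a b s1 s2 :
  tiso (LNode a s1) (LNode b s2) ->
  a = b /\ exists s2', Permutation s2 s2' /\ Forall2 (@tiso S) s1 s2'.
Proof. by move=> H; inversion H; subst; split=> //; exists s2'. Qed.

Lemma tiso_refl t : tiso t t.
Proof.
elim/ltree_nested_ind: t => a s IH; apply: tiso_node (Permutation_refl s) _.
by elim: IH => *; constructor.
Qed.

Lemma tiso_sym t1 t2 : tiso t1 t2 -> tiso t2 t1.
Proof.
move: t2; elim/ltree_nested_ind: t1 => a s1 IH [b s2] /tiso_LNode_inv[<- [s2' [P F]]].
have F' : Forall2 (@tiso S) s2' s1.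
  apply: Forall2_flip; elim: F IH {P} => [|x y l l' Hxy _ IHF] IH; first by constructor.
  by constructor; [exact: (Forall_inv IH) _ Hxy | exact: IHF (Forall_inv_tail IH)].
have [s1' [P1 F1]] := Permutation_Forall2 (Permutation_sym P) F'.
exact: tiso_node P1 F1.
Qed.

Lemma tiso_trans t1 t2 t3 : tiso t1 t2 -> tiso t2 t3 -> tiso t1 t3.
Proof.
move: t2 t3; elim/ltree_nested_ind: t1 => a s1 IH [b s2] [c s3].
move=> /tiso_LNode_inv[<- [s2' [P2 F12]]] /tiso_LNode_inv[<- [s3' [P3 F23]]].
have [s3'' [P3' F23']] := Permutation_Forall2 P2 F23.
apply: tiso_node (Permutation_trans P3 P3') _.
elim: F12 s3'' F23' IH {P2 P3 P3' F23} => [|x y l l' Hxy _ IHF] s3'' F IH.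
  by inversion F.
inversion F as [|? ? ? ? Hy F']; subst; constructor.
  exact: (Forall_inv IH) _ _ Hxy Hy.
exact: IHF _ F' (Forall_inv_tail IH).
Qed.

Lemma asbool_tiso_r x y z : tiso y z -> `[< tiso x y >] = `[< tiso x z >].
Proof.
move=> Hyz; apply/asboolP/asboolP => Hx; first exact: tiso_trans Hx Hyz.
exact: tiso_trans Hx (tiso_sym Hyz).
Qed.

Lemma mult_cons s x y : mult (y :: s) x = `[< tiso x y >] + mult s x.
Proof. by []. Qed.

Lemma mult_cat s1 s2 x : mult (s1 ++ s2) x = mult s1 x + mult s2 x.
Proof. exact: count_cat. Qed.

Lemma mult_tiso s x y : tiso x y -> mult s x = mult s y.
Proof.
move=> Hxy; apply: eq_count => z /=; apply/asboolP/asboolP => H.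
  exact: tiso_trans (tiso_sym Hxy) H.
exact: tiso_trans Hxy H.
Qed.

Lemma mult_perm s1 s2 x : Permutation s1 s2 -> mult s1 x = mult s2 x.
Proof.
elim=> [|y l l' _ IH|y z l|l l' l'' _ IH1 _ IH2] //.
- by rewrite !mult_cons IH.
- by rewrite !mult_cons addnCA.
- by rewrite IH1.
Qed.

Lemma mult_Forall2 s1 s2 x : Forall2 (@tiso S) s1 s2 -> mult s1 x = mult s2 x.
Proof. by elim=> [|y z l l' Hyz _ IH] //; rewrite !mult_cons IH (asbool_tiso_r x Hyz). Qed.

Lemma mult_gt0 s x : 0 < mult s x <-> exists y, In y s /\ tiso x y.
Proof.
elim: s => [|y s IH]; first by split=> [|[y []]].
rewrite mult_cons addn_gt0 lt0b; split.
- case/orP=> [/asboolP Hxy|/IH[z [Hz Hxz]]]; first by exists y; split; [left|].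
  by exists z; split; [right|].
- case=> z [[<-|Hz] Hxz]; apply/orP; first by left; apply/asboolP.
  by right; apply/IH; exists z.
Qed.

Lemma mult_In_gt0 s x : In x s -> 0 < mult s x.
Proof. by move=> Hx; apply/mult_gt0; exists x; split=> //; apply: tiso_refl. Qed.

Lemma mult_eq0_nil s : (forall x, mult s x = 0) -> s = [::].
Proof. by case: s => // y s /(_ y) y0; have := mult_In_gt0 (in_eq y s); rewrite y0. Qed.

Lemma mult_eq_Forall2 s1 s2 :
  mult s1 =1 mult s2 -> exists s2', Permutation s2 s2' /\ Forall2 (@tiso S) s1 s2'.
Proof.
elim: s1 s2 => [|x s1 IH] s2 E.
  by exists [::]; rewrite (mult_eq0_nil (fun y => esym (E y))).
have [y [Hy Hxy]] : exists y, In y s2 /\ tiso x y by apply/mult_gt0; rewrite -E mult_In_gt0 //; left.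
have [p [q s2E]] := in_split _ _ Hy; subst s2.
have E' : mult s1 =1 mult (p ++ q).
  move=> z; have := E z; rewrite mult_cons !mult_cat mult_cons (asbool_tiso_r z Hxy).
  by rewrite addnCA => /addnI.
have [s2' [P F]] := IH _ E'.
exists (y :: s2'); split; last by constructor.
exact: Permutation_trans (Permutation_sym (Permutation_middle p q y)) (perm_skip y P).
Qed.

Lemma tiso_LNodeP a b s1 s2 :
  tiso (LNode a s1) (LNode b s2) <-> a = b /\ mult s1 =1 mult s2.
Proof.
split=> [/tiso_LNode_inv[-> [s2' [P F]]]|[-> /mult_eq_Forall2[s2' [P F]]]].
  by split=> // x; rewrite (mult_Forall2 x F) (mult_perm x P).
exact: tiso_node P F.
Qed.

End LabeledTrees.

Section MeanSelection.

Variable S : Type.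
Implicit Types (x : ltree S) (ch : seq (ltree S)).

Lemma gcd_multE ch : gcd_mult ch = \big[gcdn/0]_(y <- ch) mult ch y.
Proof. by rewrite unlock. Qed.

Lemma gcd_mult_eq0 ch : gcd_mult ch = 0 -> ch = [::].
Proof.
case: ch => // y s g0; suff: 0 < gcd_mult (y :: s) by rewrite g0.
by rewrite /gcd_mult /= gcdn_gt0 (mult_In_gt0 (in_eq y s)).
Qed.

Lemma mean_select_nil ch' : mean_select [::] ch' -> ch' = [::].
Proof. by case=> [[del /Permutation_nil]]; case: ch'. Qed.

Lemma mean_select_mult ch ch' :
  mean_select ch ch' -> forall x, mult ch x = gcd_mult ch * mult ch' x.
Proof.
move=> [[del P] E] x; have [ch0|/mult_gt0[y [Hy Hxy]]] := posnP (mult ch x).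
  have /esym/eqP := mult_perm x P; rewrite mult_cat ch0 addn_eq0.
  by case/andP=> /eqP-> _; rewrite muln0.
by rewrite (mult_tiso _ Hxy) (mult_tiso ch' Hxy) E.
Qed.

Lemma mean_select_gcd0 ch ch' :
  mean_select ch ch' -> gcd_mult ch = 0 -> forall x, mult ch' x = 0.
Proof. by move=> Sel /gcd_mult_eq0 ch_nil; rewrite ch_nil in Sel; rewrite (mean_select_nil Sel). Qed.

Lemma mean_select_coprime ch ch' :
  mean_select ch ch' -> 0 < gcd_mult ch -> \big[gcdn/0]_(y <- ch) mult ch' y = 1.
Proof.
move=> Sel g_pos; apply/eqP; rewrite -(eqn_pmul2l g_pos) muln1 -biggcdn_mull.
by rewrite -(eq_bigr _ (fun y _ => mean_select_mult Sel y)) -gcd_multE.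
Qed.

Lemma proportional_nil ch1 ch2 :
  proportional (mult ch1) (mult ch2) -> ch1 = [::] -> ch2 = [::].
Proof.
move=> [a [b [_ b_pos E]]] ch1_nil; apply: mult_eq0_nil => x.
by apply/eqP; rewrite -(eqn_pmul2l b_pos) -E ch1_nil !muln0.
Qed.

Lemma proportional_mean_select (chu chu' chv chv' : seq (ltree S)) :
  mean_select chu chu' -> mean_select chv chv' ->
  proportional (mult chu) (mult chv) -> mult chu' =1 mult chv'.
Proof.
move=> Su Sv prop; have [/gcd_mult_eq0 chu_nil|gu_pos] := posnP (gcd_mult chu).
  rewrite chu_nil in Su; rewrite (proportional_nil prop chu_nil) in Sv.
  by rewrite (mean_select_nil Su) (mean_select_nil Sv).
have gv_pos : 0 < gcd_mult chv.
  rewrite lt0n; apply/eqP => /gcd_mult_eq0/(proportional_nil (proportional_sym prop)).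
  by move=> chu_nil; rewrite chu_nil in gu_pos.
case: prop => a [b [a_pos b_pos E]].
apply: (@coprime_scaled_eq _ (chu ++ chv) _ _ (a * gcd_mult chu) (b * gcd_mult chv)).
- by rewrite muln_gt0 a_pos gu_pos.
- by rewrite big_cat /= (mean_select_coprime Su gu_pos) gcd1n.
- by rewrite big_cat /= (mean_select_coprime Sv gv_pos) gcdn1.
- by move=> x; rewrite -!mulnA -(mean_select_mult Su) -(mean_select_mult Sv) E.
Qed.

Lemma mean_select_proportional (chu chu' chv chv' : seq (ltree S)) :
  mean_select chu chu' -> mean_select chv chv' ->
  mult chu' =1 mult chv' -> proportional (mult chu) (mult chv).
Proof.
move=> Su Sv E; have Mu := mean_select_mult Su; have Mv := mean_select_mult Sv.
have [gu0|gu_pos] := posnP (gcd_mult chu).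
  by exists 1, 1; split=> // x; rewrite Mu Mv -E (mean_select_gcd0 Su gu0) !muln0.
have [gv0|gv_pos] := posnP (gcd_mult chv).
  by exists 1, 1; split=> // x; rewrite Mu Mv E (mean_select_gcd0 Sv gv0) !muln0.
by exists (gcd_mult chv), (gcd_mult chu); split=> // x; rewrite Mu Mv E mulnCA.
Qed.

Lemma mean_select_mult_eq (chu chu' chv chv' : seq (ltree S)) :
  mean_select chu chu' -> mean_select chv chv' ->
  mult chu' =1 mult chv' <-> proportional (mult chu) (mult chv).
Proof.
by move=> Su Sv; split; [exact: mean_select_proportional | exact: proportional_mean_select].
Qed.

Lemma mprune_LNode_inv a ch t :
  mprune (LNode a ch) t ->
  exists chp ch', [/\ t = LNode a ch', Forall2 (@mprune S) ch chp & mean_select chp ch'].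
Proof. by move=> H; inversion H; subst; exists chp, ch'. Qed.

End MeanSelection.

Local Notation counts X := (fun c : nat => count_mem c X).

Lemma scaled_count (X Y : seq nat) a b :
  (forall c, a * count_mem c X = b * count_mem c Y) ->
  forall p : pred nat, a * count p X = b * count p Y.
Proof.
have count_rep (Z : seq nat) n p : count p (flatten (nseq n Z)) = n * count p Z.
  by rewrite count_flatten map_nseq sumn_nseq mulnC.
move=> E p; rewrite -!count_rep; move: p; apply/permP/allP => c _ /=.
by rewrite !count_rep E.
Qed.

Lemma proportional_map (f : nat -> nat) (X Y : seq nat) :
  proportional (counts X) (counts Y) ->
  proportional (counts (map f X)) (counts (map f Y)).
Proof.
case=> a [b [a_pos b_pos E]]; exists a, b; split=> // c.
by rewrite !count_map; apply: scaled_count.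
Qed.

Definition ratio (X : seq nat) (c : nat) : rat :=
  ((count_mem c X)%:R / (size X)%:R)%R.

Lemma mem_freq (X : seq nat) c r :
  ((c, r) \in freq X) = (c \in X) && (r == ratio X c).
Proof.
apply/imfsetP/andP => [[x xX [-> ->]]|[cX /eqP ->]]; first by split.
by exists c.
Qed.

Lemma ratio_eq0 (X : seq nat) c : (ratio X c == 0%R) = (c \notin X).
Proof.
rewrite mulf_eq0 invr_eq0 !pnatr_eq0 orb_idr; first exact: sameP eqP count_memPn.
by move/eqP/size0nil->.
Qed.

Lemma ratio_eq_mem (X Y : seq nat) : ratio X =1 ratio Y -> X =i Y.
Proof. by move=> E c; rewrite -[LHS]negbK -ratio_eq0 E ratio_eq0 negbK. Qed.

Lemma freq_eqE (X Y : seq nat) : freq X = freq Y <-> ratio X =1 ratio Y.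
Proof.
split=> E; last first.
  by apply/fsetP => -[c r]; rewrite !mem_freq E (ratio_eq_mem E).
have XY : X =i Y.
  move=> c; apply/idP/idP => [cX|cY].
    by have := mem_freq X c (ratio X c); rewrite cX eqxx /= E mem_freq => /andP[].
  by have := mem_freq Y c (ratio Y c); rewrite cY eqxx /= -E mem_freq => /andP[].
move=> c; have [cX|cX] := boolP (c \in X).
  by have := mem_freq X c (ratio X c); rewrite cX eqxx /= E mem_freq => /andP[_ /eqP].
have /eqP-> : ratio X c == 0%R by rewrite ratio_eq0.
by apply/esym/eqP; rewrite ratio_eq0 -XY.
Qed.

Lemma ratio_eq_proportional (X Y : seq nat) :
  ratio X =1 ratio Y <-> proportional (counts X) (counts Y).
Proof.
split=> [E|].
  move: E (ratio_eq_mem E); case: X Y => [|x X] [|y Y] E XY.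
  - by exists 1, 1.
  - by have := XY y; rewrite mem_head.
  - by have := XY x; rewrite mem_head.
  exists (size (y :: Y)), (size (x :: X)); split=> // c; rewrite mulnC [RHS]mulnC.
  by apply/eqP; rewrite -(@eqr_nat rat) !natrM -eqr_div ?pnatr_eq0 //; apply/eqP/E.
case=> a [b [a_pos b_pos E]] c.
have scale (n m k : nat) : 0 < k -> (n%:R / m%:R = (k * n)%:R / (k * m)%:R :> rat)%R.
  by move=> k_pos; rewrite !natrM -mulf_div divff ?mul1r // pnatr_eq0 -lt0n.
have sizeE : a * size X = b * size Y by rewrite -!count_predT; apply: scaled_count.
by rewrite /ratio (scale _ (size X) a) // (scale _ (size Y) b) // sizeE E.
Qed.

Lemma freq_eq_proportional (X Y : seq nat) :
  freq X = freq Y <-> proportional (counts X) (counts Y).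
Proof. exact: iff_trans (freq_eqE X Y) (ratio_eq_proportional X Y). Qed.

Section MeanWeisfeilerLeman.

Variables (Sigma : Type) (T : finType) (e : rel T) (lab : T -> Sigma).
Variables (inj0 : Sigma -> nat) (relabel : nat * {fset (nat * rat)} -> nat).
Hypotheses (inj0_inj : injective inj0) (relabel_inj : injective relabel).
Local Notation C := (mwl e lab inj0 relabel).

Lemma mwlS_eq t x y :
  C t.+1 x = C t.+1 y <->
  C t x = C t y /\ freq (nbr_colors e (C t) x) = freq (nbr_colors e (C t) y).
Proof.
split=> [/relabel_inj[Ex Ef]|[Ex Ef]]; first exact: conj Ex Ef.
change (relabel (C t x, freq (nbr_colors e (C t) x))
        = relabel (C t y, freq (nbr_colors e (C t) y))).
by rewrite Ex Ef.
Qed.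

Lemma mwl0_eq x y : C 0 x = C 0 y <-> lab x = lab y.
Proof. by split=> [/inj0_inj|/= ->]. Qed.

Lemma mwl_refine k t x y : k <= t -> C t x = C t y -> C k x = C k y.
Proof.
elim: t => [|t IH]; first by rewrite leqn0 => /eqP->.
by rewrite leq_eqVlt ltnS => /predU1P[-> //|/IH kt /mwlS_eq[/kt]].
Qed.

Lemma mwl_factor k t : k <= t -> exists f : nat -> nat, forall x, C k x = f (C t x).
Proof.
move=> kt; exists (fun c => if [pick w | C t w == c] is Some w then C k w else 0).
move=> x; case: pickP => [w /eqP/(mwl_refine kt)-> //|/(_ x)].
by rewrite eqxx.
Qed.

Lemma mwlS_eqP t u v :
  C t.+1 u = C t.+1 v <->
  lab u = lab v /\
  proportional (counts (nbr_colors e (C t) u)) (counts (nbr_colors e (C t) v)).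
Proof.
split=> [Euv|[Elab Eprop]].
  split; first exact/mwl0_eq/(mwl_refine (leq0n _) Euv).
  by case/mwlS_eq: Euv => _ /freq_eq_proportional.
suff Ek k : k <= t.+1 -> C k u = C k v by exact: Ek.
elim: k => [_|k IH kt]; first exact/mwl0_eq.
apply/mwlS_eq; split; first exact/IH/ltnW.
rewrite ltnS in kt; have [f Cf] := mwl_factor kt.
have colorsE w : nbr_colors e (C k) w = map f (nbr_colors e (C t) w).
  by rewrite /nbr_colors -map_comp; apply: eq_map.
by apply/freq_eq_proportional; rewrite !colorsE; apply: proportional_map.
Qed.

End MeanWeisfeilerLeman.

Section PrunedUnrolling.

Variables (Sigma : Type) (T : finType) (e : rel T) (lab : T -> Sigma).
Local Notation nbrs u := [seq w <- enum T | e u w].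
Local Notation prunes L w t := (mprune (unr e lab L w) t).

Lemma mprune_unr0 u t : prunes 0 u t -> t = LNode (lab u) [::].
Proof.
move=> H; have [chp [ch' [-> F Sel]]] := mprune_LNode_inv H.
by inversion F; subst; rewrite (mean_select_nil Sel).
Qed.

Lemma mprune_unrS L u t :
  prunes L.+1 u t ->
  exists chp ch', [/\ t = LNode (lab u) ch',
                      Forall2 (fun w t => prunes L w t) (nbrs u) chp & mean_select chp ch'].
Proof.
move=> H; have [chp [ch' [-> F Sel]]] := mprune_LNode_inv H.
by exists chp, ch'; split=> //; apply: Forall2_map_l.
Qed.

Variables (L : nat) (C : T -> nat).
Hypothesis C_tiso : forall w w' t t',
  prunes L w t -> prunes L w' t' -> C w = C w' <-> tiso t t'.

Lemma mult_pruned N chp w0 t0 :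
  Forall2 (fun w t => prunes L w t) N chp -> prunes L w0 t0 ->
  mult chp t0 = count_mem (C w0) (map C N).
Proof.
move=> F H0; elim: F => [|w t N' chp' Hwt _ IH] //.
rewrite mult_cons IH /=; congr (nat_of_bool _ + _).
by apply/asboolP/eqP => [/(C_tiso H0 Hwt)/esym|/esym/(C_tiso H0 Hwt)].
Qed.

Lemma proportional_pruned Nu Nv chpu chpv :
  Forall2 (fun w t => prunes L w t) Nu chpu ->
  Forall2 (fun w t => prunes L w t) Nv chpv ->
  proportional (mult chpu) (mult chpv) <->
  proportional (counts (map C Nu)) (counts (map C Nv)).
Proof.
move=> Fu Fv.
pose R x c := exists w t, [/\ C w = c, prunes L w t & tiso x t].
have partner N chp : Forall2 (fun w t => prunes L w t) N chp ->
    (forall x, 0 < mult chp x -> exists c, R x c) /\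
    (forall c, 0 < count_mem c (map C N) -> exists x, R x c).
  move=> F; split=> [x /mult_gt0[t [/(Forall2_In_r F)[w Hwt] Hxt]]|c].
    by exists (C w), w, t.
  rewrite -has_count has_pred1 => /mapP[w /(Forall2_mem_l F)[t Hwt] ->].
  by exists t, w, t; split=> //; apply: tiso_refl.
have [suppu suppu'] := partner _ _ Fu; have [suppv suppv'] := partner _ _ Fv.
apply: (proportional_transfer (R := R)).
- move=> x _ [w [t [<- Hwt Hxt]]].
  by rewrite !(mult_tiso _ Hxt) (mult_pruned Fu Hwt) (mult_pruned Fv Hwt).
- by move=> x; rewrite addn_gt0 => /orP[/suppu|/suppv].
- by move=> c; rewrite addn_gt0 => /orP[/suppu'|/suppv'].
Qed.

End PrunedUnrolling.

Theorem mainTheorem1 (Sigma : countType) (T : finType) (e : rel T)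
    (lab : T -> Sigma) (inj0 : Sigma -> nat)
    (relabel : nat * {fset (nat * rat)} -> nat)
    (L : nat) (u v : T) (Tu Tv : ltree Sigma) :
  symmetric e -> irreflexive e ->
  injective inj0 -> injective relabel ->
  (* RELABEL produces colors not used in previous iterations *)
  (forall (t s : nat) (x y : T), (s < t)%N ->
     mwl e lab inj0 relabel t x <> mwl e lab inj0 relabel s y) ->
  mprune (unr e lab L u) Tu -> mprune (unr e lab L v) Tv ->
  (mwl e lab inj0 relabel L u = mwl e lab inj0 relabel L v <-> tiso Tu Tv).
Proof.
move=> _ _ inj0_inj relabel_inj _; elim: L u v Tu Tv => [|L IHL] u v Tu Tv.
  move=> /mprune_unr0-> /mprune_unr0->.
  rewrite tiso_LNodeP (mwl0_eq e lab relabel inj0_inj).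
  by split=> [->|[]].
move=> /mprune_unrS[chpu [ch'u [-> Fu Su]]] /mprune_unrS[chpv [ch'v [-> Fv Sv]]].
rewrite tiso_LNodeP (mean_select_mult_eq Su Sv) (proportional_pruned IHL Fu Fv).
exact: mwlS_eqP.
Qed.
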